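(* Let $A$ (in $\mathcal H$) and $B$ (in $\mathcal K$) be closed densely defined operators with $A\dashv B$ via a bounded intertwining operator $T$, and assume that $T^{-1}$ is everywhere defined and bounded. Then $\rho(A)\setminus\sigma_p(B)\subseteq\rho(B)$ and $\rho(B)\setminus\sigma_r(A)\subseteq\rho(A)$.
   Context: A bounded operator $T:\mathcal H\to\mathcal K$ is a bounded intertwining operator for $A$ and $B$ if $T D(A)\subseteq D(B)$ and $BT\xi=TA\xi$ for all $\xi\in D(A)$. $A\dashv B$ (quasi-similarity) means there is a bounded intertwining operator $T$ for $A$ and $B$ that is injective with densely defined inverse $T^{-1}$. Spectral notions: $\rho(A)$ = set of $\lambda$ with $A-\lambda I$ injective and $(A-\lambda I)^{-1}$ bounded everywhere defined; $\sigma_p$ = set of eigenvalues; $\sigma_r(A)$ = set of $\lambda$ with $A-\lambda I$ injective and non-dense range. *)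

From Stdlib Require Import Reals.
Open Scope R_scope.

Record Cplx : Type := mkC { Re : R; Im : R }.
Definition C0 : Cplx := mkC 0 0.
Definition C1 : Cplx := mkC 1 0.
Definition Cadd (a b : Cplx) : Cplx := mkC (Re a + Re b) (Im a + Im b).
Definition Copp (a : Cplx) : Cplx := mkC (- Re a) (- Im a).
Definition Cmul (a b : Cplx) : Cplx :=
  mkC (Re a * Re b - Im a * Im b) (Re a * Im b + Im a * Re b).
Definition Cconj (a : Cplx) : Cplx := mkC (Re a) (- Im a).

Record Hilbert : Type := {
  hcar :> Type;
  hzero : hcar;
  hadd : hcar -> hcar -> hcar;
  hopp : hcar -> hcar;
  hscal : Cplx -> hcar -> hcar;
  hinner : hcar -> hcar -> Cplx;
  hadd_assoc : forall x y z, hadd x (hadd y z) = hadd (hadd x y) z;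
  hadd_comm : forall x y, hadd x y = hadd y x;
  hadd_zero : forall x, hadd x hzero = x;
  hadd_opp : forall x, hadd x (hopp x) = hzero;
  hscal_one : forall x, hscal C1 x = x;
  hscal_mul : forall a b x, hscal (Cmul a b) x = hscal a (hscal b x);
  hscal_addv : forall a x y, hscal a (hadd x y) = hadd (hscal a x) (hscal a y);
  hscal_adds : forall a b x, hscal (Cadd a b) x = hadd (hscal a x) (hscal b x);
  hinner_add : forall x y z, hinner (hadd x y) z = Cadd (hinner x z) (hinner y z);
  hinner_scal : forall a x y, hinner (hscal a x) y = Cmul a (hinner x y);
  hinner_conj : forall x y, hinner y x = Cconj (hinner x y);
  hinner_pos : forall x, 0 <= Re (hinner x x);
  hinner_def : forall x, hinner x x = C0 -> x = hzero;
  hcomplete : forall u : nat -> hcar,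
    (forall eps, 0 < eps -> exists N, forall m n, (N <= m)%nat -> (N <= n)%nat ->
        sqrt (Re (hinner (hadd (u m) (hopp (u n))) (hadd (u m) (hopp (u n))))) < eps) ->
    exists l, forall eps, 0 < eps -> exists N, forall n, (N <= n)%nat ->
        sqrt (Re (hinner (hadd (u n) (hopp l)) (hadd (u n) (hopp l)))) < eps
}.

Arguments hzero {h}.
Arguments hadd {h}.
Arguments hopp {h}.
Arguments hscal {h}.
Arguments hinner {h}.

Definition hsub {H : Hilbert} (x y : H) : H := hadd x (hopp y).
Definition hnorm {H : Hilbert} (x : H) : R := sqrt (Re (hinner x x)).

Definition hconv {H : Hilbert} (u : nat -> H) (l : H) : Prop :=
  forall eps, 0 < eps -> exists N, forall n, (N <= n)%nat -> hnorm (hsub (u n) l) < eps.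

Definition dense {H : Hilbert} (S : H -> Prop) : Prop :=
  forall x eps, 0 < eps -> exists y, S y /\ hnorm (hsub x y) < eps.

(* An operator from H to K is a relation A with A x y meaning
   "x is in D(A) and A x = y". *)
Definition Op (H K : Hilbert) : Type := H -> K -> Prop.

Definition dom {H K : Hilbert} (A : Op H K) (x : H) : Prop := exists y, A x y.
Definition ran {H K : Hilbert} (A : Op H K) (y : K) : Prop := exists x, A x y.

Definition linear_op {H K : Hilbert} (A : Op H K) : Prop :=
  (forall x y1 y2, A x y1 -> A x y2 -> y1 = y2) /\
  A hzero hzero /\
  (forall x1 y1 x2 y2, A x1 y1 -> A x2 y2 -> A (hadd x1 x2) (hadd y1 y2)) /\
  (forall a x y, A x y -> A (hscal a x) (hscal a y)).

Definition densely_defined {H K : Hilbert} (A : Op H K) : Prop := dense (dom A).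

Definition closed_op {H K : Hilbert} (A : Op H K) : Prop :=
  forall (u : nat -> H) (v : nat -> K) x y,
    (forall n, A (u n) (v n)) -> hconv u x -> hconv v y -> A x y.

Definition closed_densely_defined {H K : Hilbert} (A : Op H K) : Prop :=
  linear_op A /\ densely_defined A /\ closed_op A.

Definition op_injective {H K : Hilbert} (A : Op H K) : Prop :=
  forall x1 x2 y, A x1 y -> A x2 y -> x1 = x2.

Definition op_inv {H K : Hilbert} (A : Op H K) : Op K H := fun y x => A x y.

Definition everywhere_defined {H K : Hilbert} (A : Op H K) : Prop :=
  forall x, dom A x.

Definition bounded_op {H K : Hilbert} (A : Op H K) : Prop :=
  exists c, forall x y, A x y -> hnorm y <= c * hnorm x.

Definition graph {H K : Hilbert} (T : H -> K) : Op H K := fun x y => y = T x.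

Definition bounded_linear {H K : Hilbert} (T : H -> K) : Prop :=
  linear_op (graph T) /\ bounded_op (graph T).

(* A - lambda I, with domain D(A) *)
Definition op_shift {H : Hilbert} (A : Op H H) (l : Cplx) : Op H H :=
  fun x z => exists y, A x y /\ z = hsub y (hscal l x).

Definition intertwines {H K : Hilbert} (T : H -> K) (A : Op H H) (B : Op K K) : Prop :=
  bounded_linear T /\
  (forall x, dom A x -> dom B (T x)) /\
  (forall x y, A x y -> B (T x) (T y)).

Definition quasi_similar_via {H K : Hilbert} (T : H -> K) (A : Op H H) (B : Op K K) : Prop :=
  intertwines T A B /\ op_injective (graph T) /\ densely_defined (op_inv (graph T)).

Definition resolvent_set {H : Hilbert} (A : Op H H) (l : Cplx) : Prop :=
  op_injective (op_shift A l) /\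
  everywhere_defined (op_inv (op_shift A l)) /\
  bounded_op (op_inv (op_shift A l)).

Definition point_spectrum {H : Hilbert} (A : Op H H) (l : Cplx) : Prop :=
  exists x, x <> hzero /\ op_shift A l x hzero.

Definition residual_spectrum {H : Hilbert} (A : Op H H) (l : Cplx) : Prop :=
  op_injective (op_shift A l) /\ ~ dense (ran (op_shift A l)).

(* A bounded, boundedly invertible intertwiner T turns A - l into B - l up to
   the isomorphism T, so the resolvent estimates pass between A and B by
   composing with T and T^-1.  What is lost is injectivity of B - l in one
   direction (supplied by l not being an eigenvalue of B) and surjectivity of
   A - l in the other: there the range of A - l is dense (l is not in the
   residual spectrum), A - l is bounded below and closed, hence onto. *)
From Pilot Require Import Defs.
From Stdlib Require Import Reals Lra Psatz Classical ClassicalEpsilon.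
Open Scope R_scope.

Lemma Cplx_eq (a b : Cplx) : Re a = Re b -> Im a = Im b -> a = b.
Proof. destruct a, b; simpl; intros -> ->; reflexivity. Qed.

Section VectorAlgebra.
Context {H : Hilbert}.
Implicit Types x y z a b c d : H.

Lemma hadd_0l x : hadd hzero x = x.
Proof. rewrite hadd_comm. apply hadd_zero. Qed.

Lemma hadd_cancel x y z : hadd x y = hadd x z -> y = z.
Proof.
  intros E.
  rewrite <- (hadd_0l y), <- (hadd_0l z), <- (hadd_opp _ x), (hadd_comm _ x (hopp x)).
  rewrite <- !hadd_assoc, E. reflexivity.
Qed.

Lemma hopp_unique x y : hadd x y = hzero -> y = hopp x.
Proof. intros E. apply (hadd_cancel x). rewrite E, hadd_opp. reflexivity. Qed.

Lemma hopp_opp x : hopp (hopp x) = x.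
Proof. symmetry. apply hopp_unique. rewrite hadd_comm. apply hadd_opp. Qed.

Lemma hopp_zero : hopp (@hzero H) = hzero.
Proof. symmetry. apply hopp_unique. apply hadd_zero. Qed.

Lemma hadd_interchange a b c d :
  hadd (hadd a b) (hadd c d) = hadd (hadd a c) (hadd b d).
Proof.
  rewrite <- (hadd_assoc _ a b), (hadd_assoc _ b c d), (hadd_comm _ b c),
    <- (hadd_assoc _ c b d), (hadd_assoc _ a c). reflexivity.
Qed.

Lemma hopp_add x y : hopp (hadd x y) = hadd (hopp x) (hopp y).
Proof.
  symmetry. apply hopp_unique.
  rewrite hadd_interchange, !hadd_opp, hadd_zero. reflexivity.
Qed.

Lemma hscal_zero l : hscal l (@hzero H) = hzero.
Proof.
  apply (hadd_cancel (hscal l hzero)). rewrite <- hscal_addv, !hadd_zero. reflexivity.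
Qed.

Lemma hscal_C0 x : hscal Defs.C0 x = hzero.
Proof.
  apply (hadd_cancel (hscal Defs.C0 x)). rewrite <- hscal_adds, hadd_zero.
  f_equal. apply Cplx_eq; simpl; ring.
Qed.

Lemma hscal_m1 x : hscal (mkC (-1) 0) x = hopp x.
Proof.
  apply hopp_unique. rewrite <- (hscal_one _ x) at 1. rewrite <- hscal_adds.
  replace (Cadd Defs.C1 (mkC (-1) 0)) with Defs.C0 by (apply Cplx_eq; simpl; ring).
  apply hscal_C0.
Qed.

Lemma hscal_opp l x : hscal l (hopp x) = hopp (hscal l x).
Proof. apply hopp_unique. rewrite <- hscal_addv, hadd_opp. apply hscal_zero. Qed.

Lemma hscal_sub l x y : hscal l (hsub x y) = hsub (hscal l x) (hscal l y).
Proof. unfold hsub. rewrite hscal_addv, hscal_opp. reflexivity. Qed.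

Lemma hscal_comm l m x : hscal l (hscal m x) = hscal m (hscal l x).
Proof. rewrite <- !hscal_mul. f_equal. apply Cplx_eq; simpl; ring. Qed.

Lemma hsub_add_add a b c d : hsub (hadd a b) (hadd c d) = hadd (hsub a c) (hsub b d).
Proof. unfold hsub. rewrite hopp_add. apply hadd_interchange. Qed.

Lemma hsub_self x : hsub x x = hzero.
Proof. apply hadd_opp. Qed.

Lemma hsub_eq0 x y : hsub x y = hzero -> x = y.
Proof.
  intros E. rewrite <- (hopp_opp x), <- (hopp_opp y), (hopp_unique x (hopp y) E).
  reflexivity.
Qed.

Lemma hsub_zero_r x : hsub x hzero = x.
Proof. unfold hsub. rewrite hopp_zero. apply hadd_zero. Qed.

Lemma hsub_swap x y : hsub y x = hopp (hsub x y).
Proof. unfold hsub. rewrite hopp_add, hopp_opp, hadd_comm. reflexivity. Qed.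

Lemma hsub_addK x a : hsub (hadd x a) a = x.
Proof. unfold hsub. rewrite <- hadd_assoc, hadd_opp, hadd_zero. reflexivity. Qed.

Lemma hadd_subK y a : hadd (hsub y a) a = y.
Proof.
  unfold hsub. rewrite <- hadd_assoc, (hadd_comm _ (hopp a) a), hadd_opp, hadd_zero.
  reflexivity.
Qed.

Lemma hsub_add_sub x y z : hadd (hsub x y) (hsub y z) = hsub x z.
Proof.
  unfold hsub. rewrite <- hadd_assoc, (hadd_assoc _ (hopp y) y), (hadd_comm _ (hopp y) y),
    hadd_opp, hadd_0l. reflexivity.
Qed.

End VectorAlgebra.

Section Norm.
Context {H : Hilbert}.
Implicit Types x y : H.

Lemma Re_hinner_sym x y : Re (hinner y x) = Re (hinner x y).
Proof. rewrite hinner_conj. reflexivity. Qed.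

Lemma Im_hinner_self x : Im (hinner x x) = 0.
Proof. pose proof (f_equal Im (hinner_conj _ x x)) as E. simpl in E. lra. Qed.

Lemma Re_hinner_add_r x y z :
  Re (hinner x (hadd y z)) = Re (hinner x y) + Re (hinner x z).
Proof.
  rewrite Re_hinner_sym, hinner_add. simpl. rewrite !(Re_hinner_sym x). reflexivity.
Qed.

Lemma Re_hinner_real_scal_r t x y :
  Re (hinner x (hscal (mkC t 0) y)) = t * Re (hinner x y).
Proof. rewrite Re_hinner_sym, hinner_scal. simpl. rewrite Re_hinner_sym. ring. Qed.

Lemma hinner_self_add x y :
  Re (hinner (hadd x y) (hadd x y)) =
  Re (hinner x x) + Re (hinner y y) + 2 * Re (hinner x y).
Proof.
  rewrite hinner_add. simpl. rewrite !Re_hinner_add_r, (Re_hinner_sym x y). ring.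
Qed.

Lemma hinner_self_scal l x :
  Re (hinner (hscal l x) (hscal l x)) = (Re l * Re l + Im l * Im l) * Re (hinner x x).
Proof.
  rewrite hinner_scal, (hinner_conj _ (hscal l x) x), hinner_scal. simpl.
  rewrite Im_hinner_self. ring.
Qed.

Lemma hnorm_ge0 x : 0 <= hnorm x.
Proof. apply sqrt_pos. Qed.

(* Nonnegativity of [|x + t y|^2] as a quadratic in the real parameter [t]. *)
Lemma Cauchy_Schwarz x y : Re (hinner x y) <= hnorm x * hnorm y.
Proof.
  unfold hnorm.
  set (a := Re (hinner x x)); set (c := Re (hinner y y)); set (b := Re (hinner x y)).
  assert (Ha : 0 <= a) by apply hinner_pos.
  assert (Hc : 0 <= c) by apply hinner_pos.
  assert (Q : forall t, 0 <= a + t * t * c + 2 * t * b).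
  { intros t. pose proof (hinner_pos _ (hadd x (hscal (mkC t 0) y))) as P.
    rewrite hinner_self_add, hinner_self_scal, Re_hinner_real_scal_r in P.
    simpl in P. fold a b c in P. nra. }
  destruct (Rle_or_lt b 0) as [Hb|Hb].
  { pose proof (Rmult_le_pos _ _ (sqrt_pos a) (sqrt_pos c)). lra. }
  assert (Hbc : b * b <= a * c).
  { destruct (Req_dec c 0) as [E|E].
    - exfalso. specialize (Q (- (a + 1) / (2 * b))). rewrite E in Q.
      replace (a + - (a + 1) / (2 * b) * (- (a + 1) / (2 * b)) * 0
               + 2 * (- (a + 1) / (2 * b)) * b) with (-1) in Q by (field; lra).
      lra.
    - specialize (Q (- b / c)).
      replace (a + - b / c * (- b / c) * c + 2 * (- b / c) * b)
        with ((a * c - b * b) / c) in Q by (field; lra).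
      apply Rmult_le_compat_r with (r := c) in Q; [|lra].
      unfold Rdiv in Q. rewrite Rmult_0_l, Rmult_assoc, Rinv_l, Rmult_1_r in Q by lra.
      lra. }
  rewrite <- sqrt_mult, <- (sqrt_square b) by lra.
  apply sqrt_le_1_alt. exact Hbc.
Qed.

Lemma hnorm_add x y : hnorm (hadd x y) <= hnorm x + hnorm y.
Proof.
  pose proof (Cauchy_Schwarz x y) as CS. unfold hnorm in *. rewrite hinner_self_add.
  pose proof (sqrt_sqrt _ (hinner_pos _ x)). pose proof (sqrt_sqrt _ (hinner_pos _ y)).
  pose proof (sqrt_pos (Re (hinner x x))). pose proof (sqrt_pos (Re (hinner y y))).
  rewrite <- (sqrt_square (sqrt (Re (hinner x x)) + sqrt (Re (hinner y y)))) by lra.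
  apply sqrt_le_1_alt. nra.
Qed.

Lemma hnorm_scal l x : hnorm (hscal l x) = sqrt (Re l * Re l + Im l * Im l) * hnorm x.
Proof. unfold hnorm. rewrite hinner_self_scal. apply sqrt_mult; [nra | apply hinner_pos]. Qed.

Lemma hnorm_opp x : hnorm (hopp x) = hnorm x.
Proof.
  rewrite <- hscal_m1, hnorm_scal. simpl.
  replace (-1 * -1 + 0 * 0) with 1 by ring. rewrite sqrt_1. ring.
Qed.

Lemma hnorm_sub_sym x y : hnorm (hsub x y) = hnorm (hsub y x).
Proof. rewrite (hsub_swap y x), hnorm_opp. reflexivity. Qed.

Lemma hnorm_sub_triangle x y z :
  hnorm (hsub x z) <= hnorm (hsub x y) + hnorm (hsub y z).
Proof. rewrite <- (hsub_add_sub x y z). apply hnorm_add. Qed.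

End Norm.

Lemma eventually_inv_succ_lt eps : 0 < eps ->
  exists N, forall n, (N <= n)%nat -> / (INR n + 1) < eps.
Proof.
  intros Heps. destruct (archimed_cor1 eps Heps) as [N [HN HN0]].
  exists N. intros n Hn.
  assert (INR N <= INR n) by (apply le_INR; exact Hn).
  assert (0 < INR N) by (apply lt_0_INR; exact HN0).
  apply Rle_lt_trans with (/ INR N); [apply Rinv_le_contravar|]; lra.
Qed.

Section Convergence.
Context {H : Hilbert}.

Lemma hconv_of_bound (u : nat -> H) a M : 0 <= M ->
  (forall n, hnorm (hsub (u n) a) <= M * / (INR n + 1)) -> hconv u a.
Proof.
  intros HM Hb eps Heps.
  destruct (eventually_inv_succ_lt (eps / (M + 1))) as [N HN].
  { apply Rdiv_lt_0_compat; lra. }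
  exists N. intros n Hn. specialize (HN n Hn).
  assert (0 < / (INR n + 1)) by (apply Rinv_0_lt_compat; pose proof (pos_INR n); lra).
  apply Rmult_lt_compat_l with (r := M + 1) in HN; [|lra].
  replace ((M + 1) * (eps / (M + 1))) with eps in HN by (field; lra).
  specialize (Hb n). nra.
Qed.

Lemma hconv_add (u v : nat -> H) a b :
  hconv u a -> hconv v b -> hconv (fun n => hadd (u n) (v n)) (hadd a b).
Proof.
  intros Hu Hv eps Heps.
  destruct (Hu (eps / 2)) as [N1 HN1]; [lra|].
  destruct (Hv (eps / 2)) as [N2 HN2]; [lra|].
  exists (max N1 N2). intros n Hn.
  rewrite hsub_add_add. eapply Rle_lt_trans; [apply hnorm_add|].
  specialize (HN1 n ltac:(lia)). specialize (HN2 n ltac:(lia)). lra.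
Qed.

Lemma hconv_scal l (u : nat -> H) a :
  hconv u a -> hconv (fun n => hscal l (u n)) (hscal l a).
Proof.
  intros Hu eps Heps.
  set (nl := sqrt (Re l * Re l + Im l * Im l)).
  assert (0 <= nl) by apply sqrt_pos.
  destruct (Hu (eps / (nl + 1))) as [N HN]; [apply Rdiv_lt_0_compat; lra|].
  exists N. intros n Hn. specialize (HN n Hn).
  rewrite <- hscal_sub, hnorm_scal. fold nl.
  apply Rmult_lt_compat_l with (r := nl + 1) in HN; [|lra].
  replace ((nl + 1) * (eps / (nl + 1))) with eps in HN by (field; lra).
  pose proof (hnorm_ge0 (hsub (u n) a)). nra.
Qed.

End Convergence.

Lemma bounded_op_nonneg {H K : Hilbert} (S : Op H K) : bounded_op S ->
  exists c, 0 <= c /\ forall x y, S x y -> hnorm y <= c * hnorm x.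
Proof.
  intros [c Hc]. exists (Rabs c). split; [apply Rabs_pos|].
  intros x y Sxy. eapply Rle_trans; [exact (Hc x y Sxy)|].
  apply Rmult_le_compat_r; [apply hnorm_ge0 | apply Rle_abs].
Qed.

Section LinearOperators.
Context {H K : Hilbert}.

Lemma graph_hsub (T : H -> K) : linear_op (graph T) ->
  forall x y, T (hsub x y) = hsub (T x) (T y).
Proof.
  intros (_ & _ & Hadd & Hscal) x y. symmetry.
  apply Hadd; [reflexivity|]. rewrite <- !hscal_m1. apply Hscal. reflexivity.
Qed.

Lemma graph_hscal (T : H -> K) : linear_op (graph T) ->
  forall l x, T (hscal l x) = hscal l (T x).
Proof. intros (_ & _ & _ & Hscal) l x. symmetry. apply Hscal. reflexivity. Qed.

Lemma linear_op_sub (S : Op H K) : linear_op S ->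
  forall x y x' y', S x y -> S x' y' -> S (hsub x x') (hsub y y').
Proof.
  intros (_ & _ & Hadd & Hscal) x y x' y' Sxy Sxy'. apply Hadd; [exact Sxy|].
  rewrite <- !hscal_m1. apply Hscal. exact Sxy'.
Qed.

Lemma op_injective_of_kernel (S : Op H K) : linear_op S ->
  (forall x, S x hzero -> x = hzero) -> op_injective S.
Proof.
  intros HS Hker x1 x2 y S1 S2. apply hsub_eq0, Hker.
  rewrite <- (hsub_self y). exact (linear_op_sub S HS _ _ _ _ S1 S2).
Qed.

(* Preimages of approximations of [z] form a Cauchy sequence since [S^-1] is
   bounded; its limit is a preimage of [z] by completeness and closedness. *)
Lemma closed_bounded_below_dense_range (S : Op H K) :
  linear_op S -> closed_op S -> bounded_op (op_inv S) -> dense (ran S) ->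
  everywhere_defined (op_inv S).
Proof.
  intros HS Sclosed Sbelow Sdense z.
  destruct (bounded_op_nonneg _ Sbelow) as [c [Hc0 Hc]].
  assert (Happrox : forall n : nat, exists p : H * K,
             S (fst p) (snd p) /\ hnorm (hsub z (snd p)) < / (INR n + 1)).
  { intros n.
    assert (Hpos : 0 < / (INR n + 1)) by (apply Rinv_0_lt_compat; pose proof (pos_INR n); lra).
    destruct (Sdense z _ Hpos) as [w [[x Sxw] Hw]]. exists (x, w). auto. }
  destruct (choice _ Happrox) as [p Hp].
  set (x := fun n => fst (p n)); set (w := fun n => snd (p n)).
  assert (Hw : forall n, hnorm (hsub (w n) z) < / (INR n + 1)).
  { intros n. rewrite hnorm_sub_sym. apply Hp. }
  assert (x_Cauchy : forall eps, 0 < eps -> exists N, forall m n,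
             (N <= m)%nat -> (N <= n)%nat -> hnorm (hsub (x m) (x n)) < eps).
  { intros eps Heps.
    destruct (eventually_inv_succ_lt (eps / (2 * c + 1))) as [N HN].
    { apply Rdiv_lt_0_compat; lra. }
    exists N. intros m n Hm Hn.
    assert (Hmn : hnorm (hsub (x m) (x n)) <= c * hnorm (hsub (w m) (w n))).
    { apply (Hc (hsub (w m) (w n))). apply linear_op_sub; [exact HS | apply Hp | apply Hp]. }
    pose proof (hnorm_sub_triangle (w m) z (w n)) as Htri.
    rewrite (hnorm_sub_sym z) in Htri.
    pose proof (Hw m); pose proof (Hw n); pose proof (HN m Hm); pose proof (HN n Hn).
    assert (E : 2 * c * (eps / (2 * c + 1)) < eps).
    { apply Rmult_lt_reg_r with (2 * c + 1); [lra|].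
      replace (2 * c * (eps / (2 * c + 1)) * (2 * c + 1)) with (2 * c * eps)
        by (field; lra). nra. }
    nra. }
  destruct (hcomplete _ x x_Cauchy) as [x0 Hx0].
  exists x0. apply (Sclosed x w x0 z).
  - intros n. apply Hp.
  - exact Hx0.
  - apply (hconv_of_bound w z 1); [lra|]. intros n. rewrite Rmult_1_l. left. apply Hw.
Qed.

End LinearOperators.

Section Shift.
Context {H : Hilbert} (A : Op H H) (l : Cplx).

Lemma op_shift_linear : linear_op A -> linear_op (op_shift A l).
Proof.
  intros (Afun & A0 & Aadd & Ascal). split; [|split; [|split]].
  - intros x z1 z2 [y1 [Ay1 ->]] [y2 [Ay2 ->]]. rewrite (Afun _ _ _ Ay1 Ay2). reflexivity.
  - exists hzero. split; [exact A0|]. rewrite hscal_zero, hsub_zero_r. reflexivity.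
  - intros x1 z1 x2 z2 [y1 [Ay1 ->]] [y2 [Ay2 ->]]. exists (hadd y1 y2). split.
    + apply Aadd; assumption.
    + rewrite hscal_addv, hsub_add_add. reflexivity.
  - intros a x z [y [Ay ->]]. exists (hscal a y). split.
    + apply Ascal. exact Ay.
    + rewrite hscal_sub, hscal_comm. reflexivity.
Qed.

Lemma op_shift_closed : closed_op A -> closed_op (op_shift A l).
Proof.
  intros Aclosed x w x0 w0 Hxw Hx Hw.
  pose (y := fun n => hadd (w n) (hscal l (x n))).
  assert (Axy : forall n, A (x n) (y n)).
  { intros n. destruct (Hxw n) as [yn [Ayn E]]. unfold y. rewrite E, hadd_subK. exact Ayn. }
  exists (hadd w0 (hscal l x0)). split.
  - apply (Aclosed x y x0); [exact Axy | exact Hx |].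
    apply hconv_add; [exact Hw | apply hconv_scal; exact Hx].
  - symmetry. apply hsub_addK.
Qed.

Lemma op_shift_injective : linear_op A -> ~ point_spectrum A l ->
  op_injective (op_shift A l).
Proof.
  intros HA Hnp. apply op_injective_of_kernel; [apply op_shift_linear; exact HA|].
  intros x Hx. apply NNPP. intros Hx0. apply Hnp. exists x. auto.
Qed.

Lemma op_shift_dense_range : op_injective (op_shift A l) -> ~ residual_spectrum A l ->
  dense (ran (op_shift A l)).
Proof. intros Hinj Hnr. apply NNPP. intros Hnd. apply Hnr. split; assumption. Qed.

End Shift.

Lemma intertwines_shift {H K : Hilbert} (T : H -> K) (A : Op H H) (B : Op K K) l :
  intertwines T A B ->
  forall x w, op_shift A l x w -> op_shift B l (T x) (T w).
Proof.
  intros [[TL _] [_ TAB]] x w [y [Ay ->]]. exists (T y). split.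
  - apply TAB. exact Ay.
  - rewrite (graph_hsub T TL), (graph_hscal T TL). reflexivity.
Qed.

(** * Transfer along an isomorphism *)

Section Transfer.
Context {H K : Hilbert} (T : H -> K) (S : Op H H) (S' : Op K K).
Hypothesis ST : forall x w, S x w -> S' (T x) (T w).
Hypothesis T_bounded : bounded_op (graph T).
Hypothesis Tinv_bounded : bounded_op (op_inv (graph T)).

Lemma op_injective_transfer : op_injective (graph T) -> op_injective S' ->
  op_injective S.
Proof.
  intros Tinj S'inj x1 x2 w S1 S2.
  apply (Tinj x1 x2 (T x2)); [|reflexivity].
  exact (eq_sym (S'inj _ _ _ (ST _ _ S1) (ST _ _ S2))).
Qed.

Lemma everywhere_defined_inv_transfer :
  everywhere_defined (op_inv (graph T)) -> everywhere_defined (op_inv S) ->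
  everywhere_defined (op_inv S').
Proof.
  intros Tonto Sonto z. destruct (Tonto z) as [w ->]. destruct (Sonto w) as [x Sxw].
  exists (T x). exact (ST _ _ Sxw).
Qed.

Lemma bounded_inv_transfer : bounded_op (op_inv S') -> bounded_op (op_inv S).
Proof.
  intros S'below.
  destruct (bounded_op_nonneg _ T_bounded) as [cT [HcT0 HcT]].
  destruct (bounded_op_nonneg _ Tinv_bounded) as [cTi [HcTi0 HcTi]].
  destruct (bounded_op_nonneg _ S'below) as [c [Hc0 Hc]].
  exists (cTi * (c * cT)). intros w x Sxw. rewrite !Rmult_assoc.
  apply Rle_trans with (cTi * hnorm (T x)); [exact (HcTi (T x) x eq_refl)|].
  apply Rmult_le_compat_l; [exact HcTi0|].
  apply Rle_trans with (c * hnorm (T w)); [exact (Hc _ _ (ST _ _ Sxw))|].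
  apply Rmult_le_compat_l; [exact Hc0 | exact (HcT w (T w) eq_refl)].
Qed.

Lemma bounded_inv_transfer_back : everywhere_defined (op_inv (graph T)) ->
  op_injective S' -> everywhere_defined (op_inv S) -> bounded_op (op_inv S) ->
  bounded_op (op_inv S').
Proof.
  intros Tonto S'inj Sonto Sbelow.
  destruct (bounded_op_nonneg _ T_bounded) as [cT [HcT0 HcT]].
  destruct (bounded_op_nonneg _ Tinv_bounded) as [cTi [HcTi0 HcTi]].
  destruct (bounded_op_nonneg _ Sbelow) as [c [Hc0 Hc]].
  exists (cT * (c * cTi)). intros z u S'uz.
  destruct (Tonto z) as [w ->]. destruct (Sonto w) as [x Sxw].
  rewrite (S'inj _ _ _ S'uz (ST _ _ Sxw)), !Rmult_assoc.
  apply Rle_trans with (cT * hnorm x); [exact (HcT x (T x) eq_refl)|].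
  apply Rmult_le_compat_l; [exact HcT0|].
  apply Rle_trans with (c * hnorm w); [exact (Hc _ _ Sxw)|].
  apply Rmult_le_compat_l; [exact Hc0 | exact (HcTi (T w) w eq_refl)].
Qed.

End Transfer.

Theorem corollary3p12 (H K : Hilbert) (A : Op H H) (B : Op K K) (T : H -> K) :
  closed_densely_defined A ->
  closed_densely_defined B ->
  quasi_similar_via T A B ->
  everywhere_defined (op_inv (graph T)) ->
  bounded_op (op_inv (graph T)) ->
  (forall l : Cplx, resolvent_set A l -> ~ point_spectrum B l -> resolvent_set B l) /\
  (forall l : Cplx, resolvent_set B l -> ~ residual_spectrum A l -> resolvent_set A l).
Proof.
  intros [Alin [_ Aclosed]] [Blin _] [TAB [Tinj _]] Tonto Tinv_bounded.
  pose proof TAB as [[_ T_bounded] _].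
  split.
  - intros l [_ [Aonto Abelow]] Hnp.
    pose proof (op_shift_injective B l Blin Hnp) as Binj.
    split; [exact Binj | split].
    + exact (everywhere_defined_inv_transfer T _ _
               (intertwines_shift T A B l TAB) Tonto Aonto).
    + exact (bounded_inv_transfer_back T _ _ (intertwines_shift T A B l TAB)
               T_bounded Tinv_bounded Tonto Binj Aonto Abelow).
  - intros l [Binj [_ Bbelow]] Hnr.
    pose proof (op_injective_transfer T _ _ (intertwines_shift T A B l TAB) Tinj Binj)
      as Ainj.
    pose proof (bounded_inv_transfer T _ _ (intertwines_shift T A B l TAB)
                  T_bounded Tinv_bounded Bbelow) as Abelow.
    split; [exact Ainj | split; [| exact Abelow]].
    apply closed_bounded_below_dense_range.
    + exact (op_shift_linear A l Alin).
    + exact (op_shift_closed A l Aclosed).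
    + exact Abelow.
    + exact (op_shift_dense_range A l Ainj Hnr).
Qed.
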